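(* Let $\mathcal{H}$ be a hypergraph on vertex set $V$ with $\textsc{VC-dim}(\mathcal{H})<k$. Then $|\mathrm{ext}_k(\mathcal{H})|=O(|V|^k)$.
   Context: A hypergraph $\mathcal{H}$ on $V$ is a family of subsets (hyperedges) of $V$. A $k$-trace on $V$ is a pair $(T,S)$ with $S\subseteq V$, $|S|=k$, $T\subseteq S$; a set $F\subseteq V$ realizes $(T,S)$ if $F\cap S=T$. $\mathrm{traces}_k(F)$ is the set of $k$-traces realized by $F$, and $\mathrm{traces}_k(\mathcal{H})=\bigcup_{F\in\mathcal{H}}\mathrm{traces}_k(F)$. The $k$-extension $\mathrm{ext}_k(\mathcal{H})$ is the hypergraph on $V$ whose hyperedges are all $E\subseteq V$ with $\mathrm{traces}_k(E)\subseteq\mathrm{traces}_k(\mathcal{H})$. A set $U$ is shattered by $\mathcal{H}$ if for each $U'\subseteq U$ some $F\in\mathcal{H}$ has $F\cap U=U'$; $\textsc{VC-dim}(\mathcal{H})$ is the largest size of a shattered set. *)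

From mathcomp Require Import all_boot.
Set Implicit Arguments. Unset Strict Implicit. Unset Printing Implicit Defensive.

Section Traces.
Variable T : finType.

Definition is_ktrace (k : nat) (p : {set T} * {set T}) : bool :=
  (#|p.2| == k) && (p.1 \subset p.2).

Definition traces (k : nat) (F : {set T}) : {set {set T} * {set T}} :=
  [set p | is_ktrace k p && (F :&: p.2 == p.1)].

Definition traces_hyp (k : nat) (H : {set {set T}}) : {set {set T} * {set T}} :=
  \bigcup_(F in H) traces k F.

Definition ext (k : nat) (H : {set {set T}}) : {set {set T}} :=
  [set E : {set T} | traces k E \subset traces_hyp k H].

Definition shattered (H : {set {set T}}) (U : {set T}) : Prop :=
  forall U' : {set T}, U' \subset U -> exists2 F, F \in H & F :&: U = U'.

Definition VCdim_lt (H : {set {set T}}) (k : nat) : Prop :=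
  forall U : {set T}, shattered H U -> #|U| < k.
End Traces.

From mathcomp Require Import all_boot.
Set Implicit Arguments. Unset Strict Implicit. Unset Printing Implicit Defensive.

(* Pajor's form of the Sauer-Shelah lemma: a family F has at most as many
   members as it shatters sets.  For a point x, |F| is the sum of the sizes of
   [deletion F x] and [paired F x]; the sets shattered by the former avoid x
   and are shattered by F, while x |: U is shattered by F whenever U is
   shattered by the latter, so induction on the ground set applies.
   A set shattered by ext_k(H) has fewer than k elements: a k-subset S of it
   would also be shattered, each pattern E :&: S would be a k-trace of some
   E in ext_k(H), hence realized by a member of H, and H would shatter S.
   So |ext_k(H)| is at most the number \sum_(i < k) 'C(n, i) <= k * n ^ k of
   sets of size < k. *)

Lemma bin_leq_exp n m : 'C(n, m) <= n ^ m.
Proof.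
apply: leq_trans (leq_pmulr _ (fact_gt0 m)) _.
rewrite bin_ffact ffact_prod -[X in _ <= _ ^ X](card_ord m) -prod_nat_const.
by apply: leq_prod => i _; apply: leq_subr.
Qed.

Section Shattering.
Variable T : finType.
Implicit Types (F H : {set {set T}}) (A B D S U : {set T}) (x : T).

Lemma setD1_id x A : x \notin A -> A :\ x = A.
Proof. by move=> xA; apply/setDidPl; rewrite disjoint_sym disjoints1. Qed.

Definition shattered_sets F : {set {set T}} :=
  [set U : {set T} | [forall U' : {set T},
     (U' \subset U) ==> [exists A in F, A :&: U == U']]].

Lemma shattered_setsP F U : reflect (shattered F U) (U \in shattered_sets F).
Proof.
rewrite inE; apply: (iffP forallP) => [shU U' sU'U | shU U'].
  by have /existsP[A /andP[AF /eqP AU]] := implyP (shU U') sU'U; exists A.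
apply/implyP => /shU[A AF AU]; apply/existsP; exists A.
by rewrite AF AU eqxx.
Qed.

Lemma shattered_subset F S U : S \subset U -> shattered F U -> shattered F S.
Proof.
move=> sSU shU S' sS'S; have [A AF AU] := shU S' (subset_trans sS'S sSU).
by exists A; rewrite // -(setIidPr sSU) setIA AU; apply/setIidPl.
Qed.

Lemma notin_shattered F x U :
  (forall A, A \in F -> x \notin A) -> shattered F U -> x \notin U.
Proof.
move=> xF shU; apply/negP => xU; have [A AF AU] := shU U (subxx U).
by have := xF A AF; rewrite -AU in xU; rewrite (setIP xU).1.
Qed.

Definition deletion F x : {set {set T}} := [set A :\ x | A in F].

Definition paired F x : {set {set T}} :=
  [set B in F | (x \notin B) && (x |: B \in F)].

Section Split.
Variables (F : {set {set T}}) (x : T).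

Let hasx := [set A : {set T} | x \in A].

Lemma deletion_split :
  deletion F x = (F :\: hasx) :|: [set A :\ x | A in F :&: hasx].
Proof.
rewrite /deletion -{1}(setID F hasx) imsetU setUC; congr (_ :|: _).
rewrite -[RHS]imset_id; apply: eq_in_imset => A; rewrite !inE => /andP[xA _].
exact: setD1_id.
Qed.

Lemma paired_split :
  paired F x = (F :\: hasx) :&: [set A :\ x | A in F :&: hasx].
Proof.
apply/setP => B; rewrite !inE.
apply/idP/idP => [/and3P[BF xB xBF] | /andP[/andP[xB BF] /imsetP[A]]].
  rewrite BF xB; apply/imsetP; exists (x |: B); last by rewrite setU1K.
  by rewrite !inE eqxx xBF.
by rewrite !inE => /andP[AF xA] eB; rewrite BF xB eB setD1K.
Qed.

Lemma card_deletion_paired : #|deletion F x| + #|paired F x| = #|F|.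
Proof.
rewrite deletion_split paired_split cardsUI card_in_imset.
  by rewrite addnC cardsID.
move=> A A'; rewrite !inE => /andP[_ xA] /andP[_ xA'] AA'.
by rewrite -(setD1K xA) -(setD1K xA') AA'.
Qed.

End Split.

Lemma notin_deletion F x B : B \in deletion F x -> x \notin B.
Proof. by case/imsetP => A _ ->; rewrite setD11. Qed.

Lemma notin_paired F x B : B \in paired F x -> x \notin B.
Proof. by rewrite inE => /and3P[]. Qed.

Lemma paired_sub_deletion F x : paired F x \subset deletion F x.
Proof.
apply/subsetP => B; rewrite inE => /and3P[BF xB _].
by apply/imsetP; exists B; rewrite ?setD1_id.
Qed.

Lemma deletion_powerset F D x :
  F \subset powerset D -> deletion F x \subset powerset (D :\ x).
Proof.
move=> sFD; apply/subsetP => _ /imsetP[A AF ->].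
by rewrite powersetE setSD // -powersetE (subsetP sFD).
Qed.

Lemma shattered_deletion F x U : shattered (deletion F x) U -> shattered F U.
Proof.
move=> shU; have xU := notin_shattered (@notin_deletion F x) shU.
move=> U' /shU[_ /imsetP[A AF ->] AU]; exists A => //.
by rewrite -AU setIDAC setD1_id // inE negb_and xU orbT.
Qed.

Lemma shattered_paired F x U :
  shattered (paired F x) U -> shattered F (x |: U).
Proof.
move=> shU W sW.
have sWU : W :\ x \subset U by rewrite subDset.
have [B] := shU _ sWU.
rewrite inE => /and3P[BF xB xBF] BU.
have [xW | xW] := boolP (x \in W).
  by exists (x |: B); rewrite // -setUIr BU setD1K.
exists B; rewrite // setIUr BU setD1_id // disjoint_setI0 ?set0U //.
by rewrite disjoint_sym disjoints1.
Qed.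

Lemma card_shattered_sets_split F x :
  #|shattered_sets (deletion F x)| + #|shattered_sets (paired F x)|
    <= #|shattered_sets F|.
Proof.
have notin_sh U : U \in shattered_sets (paired F x) -> x \notin U.
  by move/shattered_setsP; apply: notin_shattered; apply: notin_paired.
have inj_x : {in shattered_sets (paired F x) &, injective (fun U => x |: U)}.
  by move=> U V /notin_sh/setU1K {2}<- /notin_sh/setU1K {2}<- ->.
rewrite addnC -(cardsID [set A : {set T} | x \in A] (shattered_sets F)).
rewrite leq_add //.
  rewrite -(card_in_imset inj_x).
  apply/subset_leq_card/subsetP => _ /imsetP[U shU ->].
  apply/setIP; split; last by rewrite inE setU11.
  exact/shattered_setsP/shattered_paired/shattered_setsP.
apply/subset_leq_card/subsetP => U /shattered_setsP shU.
apply/setDP; split; first exact/shattered_setsP/(shattered_deletion shU).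
by rewrite inE (notin_shattered (@notin_deletion F x) shU).
Qed.

Lemma set0_shattered F : F != set0 -> set0 \in shattered_sets F.
Proof.
case/set0Pn => A AF; apply/shattered_setsP => U'; rewrite subset0 => /eqP ->.
by exists A; rewrite ?setI0.
Qed.

Lemma card_le_shattered_sets_powerset D F :
  F \subset powerset D -> #|F| <= #|shattered_sets F|.
Proof.
have [n] := ubnP #|D|; elim: n D F => // n IH D F; rewrite ltnS => Dn sFD.
have [D0 | [x xD]] := set_0Vmem D.
  have [-> | F0] := eqVneq F set0; first by rewrite cards0.
  rewrite D0 powerset0 in sFD; apply: leq_trans (subset_leq_card sFD) _.
  by rewrite cards1 card_gt0; apply/set0Pn; exists set0; apply: set0_shattered.
have Dxn : #|D :\ x| < n by move: Dn; rewrite (cardsD1 x D) xD.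
have sF0 := deletion_powerset x sFD.
rewrite -(card_deletion_paired F x).
apply: leq_trans (card_shattered_sets_split F x).
apply: leq_add; apply: (IH _ _ Dxn) => //.
exact: subset_trans (paired_sub_deletion F x) sF0.
Qed.

Theorem card_le_shattered_sets F : #|F| <= #|shattered_sets F|.
Proof.
apply: (@card_le_shattered_sets_powerset setT).
by apply/subsetP => A; rewrite powersetE subsetT.
Qed.

Lemma exists_subset_card U m :
  m <= #|U| -> exists2 S : {set T}, S \subset U & #|S| = m.
Proof.
rewrite -bin_gt0 -cards_draws card_gt0 => /set0Pn[S].
by rewrite inE => /andP[sSU /eqP cS]; exists S.
Qed.

Lemma shattered_ext k H S : #|S| = k -> shattered (ext k H) S -> shattered H S.
Proof.
move=> cS shS S' sS'S; have [E EH ES] := shS S' sS'S.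
have trE : (S', S) \in traces k E.
  by rewrite inE /is_ktrace /= cS eqxx sS'S ES eqxx.
move: EH; rewrite inE => /subsetP/(_ _ trE)/bigcupP[F FH].
by rewrite inE => /andP[_ /eqP FS]; exists F.
Qed.

Lemma card_shattered_ext_lt k H U :
  VCdim_lt H k -> shattered (ext k H) U -> #|U| < k.
Proof.
move=> vcH shU; rewrite ltnNge; apply/negP => /exists_subset_card[S sSU cS].
by have := vcH S (shattered_ext cS (shattered_subset sSU shU)); rewrite cS ltnn.
Qed.

Lemma card_sets_ltn k :
  #|[set U : {set T} | #|U| < k]| = \sum_(i < k) 'C(#|T|, i).
Proof.
elim: k => [|k IH].
  by rewrite big_ord0; apply: eq_card0 => U; rewrite inE.
have -> : [set U : {set T} | #|U| < k.+1] =
    [set U : {set T} | #|U| < k] :|: [set U : {set T} | #|U| == k].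
  by apply/setP => U; rewrite !inE ltnS leq_eqVlt orbC.
rewrite cardsU big_ord_recr /= -IH -card_draws.
rewrite (_ : _ :&: _ = set0) ?cards0 ?subn0 //.
by apply/setP => U; rewrite !inE andbC; case: eqP => // ->; rewrite ltnn.
Qed.

Lemma card_sets_ltn_le k :
  0 < #|T| -> #|[set U : {set T} | #|U| < k]| <= k * #|T| ^ k.
Proof.
move=> T_gt0; rewrite card_sets_ltn -[X in _ <= X * _](card_ord k).
rewrite -sum_nat_const.
apply: leq_sum => i _; apply: leq_trans (bin_leq_exp _ _) _.
exact: leq_pexp2l T_gt0 (ltnW (ltn_ord i)).
Qed.

End Shattering.

Theorem corollary2 (k : nat) :
  exists C N : nat,
    forall (T : finType) (H : {set {set T}}),
      N <= #|T| -> VCdim_lt H k -> #|ext k H| <= C * #|T| ^ k.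
Proof.
exists k, 1 => T H T_gt0 vcH.
apply: leq_trans (card_le_shattered_sets _) _.
apply: leq_trans (card_sets_ltn_le k T_gt0).
apply/subset_leq_card/subsetP => U /shattered_setsP/(card_shattered_ext_lt vcH).
by rewrite inE.
Qed.
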